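(* Let $\ell\ge1$, $m\ge0$, positive integers $n_0,\dots,n_m$ with $n:=\sum_j n_j-1$, distinct points $z_0=0,z_1,\dots,z_m$ in the open unit disc, and $\ell\times\ell$ matrices $W_{jk}$ be given, with $W$, $Z$, $e$, $S$ as below. Suppose $W$ satisfies the generalized Pick condition $W(S\otimes I_\ell)+(S\otimes I_\ell)W^*>0$. Let $T=(W-\tfrac12I)(W+\tfrac12I)^{-1}$ and, for $\lambda\in[0,1]$, $W(\lambda)=(I-\lambda T)^{-1}-\tfrac12 I$. Then for all $\lambda\in[0,1]$, $$W(\lambda)(S\otimes I_\ell)+(S\otimes I_\ell)W(\lambda)^*>0.$$
   Context: $W_j$ is the $\ell n_j\times\ell n_j$ block lower-triangular block-Toeplitz matrix with $W_{j0}$ on the block diagonal and $W_{jk}$ on the $k$-th block subdiagonal ($k=1,\dots,n_j-1$); $W=\operatorname{diag}(W_0,\dots,W_m)$. $Z_j$ is the $n_j\times n_j$ lower bidiagonal matrix with $z_j$ on the diagonal and $1$ on the subdiagonal; $Z=\operatorname{diag}(Z_0,\dots,Z_m)$. $e\in\mathbb{R}^{n+1}$ stacks the vectors $(1,0,\dots,0)'\in\mathbb{R}^{n_j}$, $j=0,\dots,m$. $S$ is the unique solution of the Lyapunov equation $S=ZSZ^*+ee'$. $\otimes$ is the Kronecker product, $^*$ conjugate transpose, and $>0$ means positive definite. *)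

(* Scalars: an arbitrary numClosedFieldType C (e.g. algC or
   complex R), which carries conjugation x^* and the partial order in which
   0 < x means "x is a positive real". *)
From mathcomp Require Import all_boot all_order all_algebra.
Set Implicit Arguments. Unset Strict Implicit. Unset Printing Implicit Defensive.
Import Order.TTheory GRing.Theory Num.Theory.
Local Open Scope ring_scope.

Section Defs.
Variable C : numClosedFieldType.

Definition ctmx (p q : nat) (A : 'M[C]_(p, q)) : 'M[C]_(q, p) :=
  (map_mx Num.conj A)^T.

Definition posdef (p : nat) (A : 'M[C]_p) : Prop :=
  ctmx A = A /\ forall v : 'cV[C]_p, v != 0 -> 0 < (ctmx v *m A *m v) 0 0.

(* total entry access at nat indices (0 out of range) *)
Definition getmx (p q : nat) (A : 'M[C]_(p, q)) (i j : nat) : C :=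
  match @insub nat (fun x => x < p)%N _ i, @insub nat (fun x => x < q)%N _ j with
  | Some i', Some j' => A i' j'
  | _, _ => 0
  end.

(* Kronecker product A (x) I_l, big index k <-> (k %/ l, k %% l) *)
Definition kron_id (p l : nat) (A : 'M[C]_p) : 'M[C]_(p * l) :=
  \matrix_(k, k') (if (k %% l == k' %% l)%N then getmx A (k %/ l)%N (k' %/ l)%N
                   else 0).

(* Block structure: sizes n_0,...,n_m; scalar index i < N := sum n_j
   lies in block blk i at offset off i within the block. *)
Definition sizes (m : nat) (nn : 'I_m.+1 -> nat) : seq nat :=
  [seq nn j | j <- enum 'I_m.+1].
Definition Ntot (m : nat) (nn : 'I_m.+1 -> nat) : nat := sumn (sizes nn).
Definition blk (m : nat) (nn : 'I_m.+1 -> nat) (i : nat) : 'I_m.+1 :=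
  inord (reshape_index (sizes nn) i).
Definition off (m : nat) (nn : 'I_m.+1 -> nat) (i : nat) : nat :=
  reshape_offset (sizes nn) i.

(* Z = diag(Z_0,...,Z_m), Z_j lower bidiagonal, z_j on diagonal, 1 below *)
Definition Zmx (m : nat) (nn : 'I_m.+1 -> nat) (z : 'I_m.+1 -> C)
  : 'M[C]_(Ntot nn) :=
  \matrix_(i, i')
    if blk nn i == blk nn i' then
      (if off nn i == off nn i' then z (blk nn i)
       else if off nn i == (off nn i').+1 then 1 else 0)
    else 0.

(* e stacks the vectors (1,0,...,0)' in R^{n_j} *)
Definition evec (m : nat) (nn : 'I_m.+1 -> nat) : 'cV[C]_(Ntot nn) :=
  \col_i (if off nn i == 0%N then 1 else 0).

(* W = diag(W_0,...,W_m), W_j block lower-triangular block-Toeplitz with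
   W_{j0} on the diagonal and W_{jk} on the k-th block subdiagonal.
   Big index k <-> (scalar index k %/ l, entry k %% l). *)
Definition Wmx (l m : nat) (nn : 'I_m.+1 -> nat)
  (Wjk : 'I_m.+1 -> nat -> 'M[C]_l) : 'M[C]_(Ntot nn * l) :=
  \matrix_(k, k')
    let i := (k %/ l)%N in let i' := (k' %/ l)%N in
    if (blk nn i == blk nn i') && (off nn i' <= off nn i)%N then
      getmx (Wjk (blk nn i) (off nn i - off nn i')%N) (k %% l)%N (k' %% l)%N
    else 0.

End Defs.

(* [S] is positive definite: it solves the Stein equation [S = Z S Z^* + e e^*]
   in which [Z^*] is upper triangular with spectrum in the open unit disc and,
   the [z_j] being distinct, every eigenvector of [Z^*] lives in a single
   Jordan block, starts at its head and hence is not orthogonal to [e]. A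
   Schur-complement induction over the leading coordinates then propagates
   positivity, and [S (x) I_l] inherits it. The rest holds for any [A > 0]:
   the Cayley transform [T = (X - 1/2)(X + 1/2)^-1] turns [X A + A X^* > 0]
   into [A - T A T^* > 0] by a congruence with [(X + 1/2)^-1]; this survives
   [T -> lambda T] because
   [A - lambda^2 T A T^* = (1 - lambda^2) A + lambda^2 (A - T A T^* )],
   and the inverse Cayley transform of [lambda T] is [W(lambda)]. *)

From mathcomp Require Import all_boot all_order all_algebra.
From mathcomp Require Import ring zify.
Set Implicit Arguments. Unset Strict Implicit. Unset Printing Implicit Defensive.
Import Order.TTheory GRing.Theory Num.Theory.
Local Open Scope ring_scope.

Section ConjugateTranspose.
Variable C : numClosedFieldType.

Lemma ctmxE p q (A : 'M[C]_(p, q)) i j : ctmx A i j = (A j i)^*.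
Proof. by rewrite !mxE. Qed.

Lemma ctmxK p q (A : 'M[C]_(p, q)) : ctmx (ctmx A) = A.
Proof. by apply/matrixP => i j; rewrite !ctmxE conjCK. Qed.

Lemma ctmxD p q (A B : 'M[C]_(p, q)) : ctmx (A + B) = ctmx A + ctmx B.
Proof. by rewrite /ctmx map_mxD linearD. Qed.

Lemma ctmxN p q (A : 'M[C]_(p, q)) : ctmx (- A) = - ctmx A.
Proof. by rewrite /ctmx map_mxN linearN. Qed.

Lemma ctmxB p q (A B : 'M[C]_(p, q)) : ctmx (A - B) = ctmx A - ctmx B.
Proof. by rewrite ctmxD ctmxN. Qed.

Lemma ctmxZ p q a (A : 'M[C]_(p, q)) : ctmx (a *: A) = a^* *: ctmx A.
Proof. by apply/matrixP => i j; rewrite !(ctmxE, mxE) rmorphM. Qed.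

Lemma ctmxM p q r (A : 'M[C]_(p, q)) (B : 'M[C]_(q, r)) :
  ctmx (A *m B) = ctmx B *m ctmx A.
Proof. by rewrite /ctmx map_mxM trmx_mul. Qed.

Lemma ctmx_scalar n a : ctmx (a%:M : 'M[C]_n) = a^*%:M.
Proof. by rewrite /ctmx map_scalar_mx tr_scalar_mx. Qed.

Lemma ctmx0 p q : ctmx (0 : 'M[C]_(p, q)) = 0.
Proof. by rewrite /ctmx map_mx0 trmx0. Qed.

Lemma ctmx_eq0 p q (A : 'M[C]_(p, q)) : (ctmx A == 0) = (A == 0).
Proof. by apply/eqP/eqP => [/(congr1 (@ctmx _ _ _))|->]; rewrite ?ctmxK ctmx0. Qed.

Lemma invmx_congrK n (P D : 'M[C]_n) : P \in unitmx ->
  invmx P *m (P *m D *m ctmx P) *m ctmx (invmx P) = D.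
Proof.
move=> uP; rewrite !mulmxA mulVmx // mul1mx -mulmxA -ctmxM mulVmx //.
by rewrite ctmx_scalar rmorph1 mulmx1.
Qed.

End ConjugateTranspose.

Definition hform (C : numClosedFieldType) n (B : 'M[C]_n) (u v : 'cV[C]_n) : C :=
  (ctmx u *m B *m v) 0 0.

Local Notation qform B v := (hform B v v).

Section HermitianForms.
Variable C : numClosedFieldType.

Lemma hformE n (B : 'M[C]_n) u v :
  hform B u v = \sum_i (u i 0)^* * (B *m v) i 0.
Proof. by rewrite /hform -mulmxA mxE; apply: eq_bigr => i _; rewrite ctmxE. Qed.

Lemma hformDl n (B : 'M[C]_n) u w v : hform B (u + w) v = hform B u v + hform B w v.
Proof. by rewrite /hform ctmxD !mulmxDl mxE. Qed.

Lemma hformDr n (B : 'M[C]_n) u v w : hform B u (v + w) = hform B u v + hform B u w.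
Proof. by rewrite /hform mulmxDr mxE. Qed.

Lemma hformZl n (B : 'M[C]_n) a u v : hform B (a *: u) v = a^* * hform B u v.
Proof. by rewrite /hform ctmxZ -!scalemxAl mxE. Qed.

Lemma hformZr n (B : 'M[C]_n) a u v : hform B u (a *: v) = a * hform B u v.
Proof. by rewrite /hform -scalemxAr mxE. Qed.

Lemma hform0r n (B : 'M[C]_n) u : hform B u 0 = 0.
Proof. by rewrite /hform mulmx0 mxE. Qed.

Lemma hform_herm n (B : 'M[C]_n) u v : ctmx B = B -> hform B u v = (hform B v u)^*.
Proof. by move=> hB; rewrite /hform -ctmxE !ctmxM ctmxK hB mulmxA. Qed.

Lemma hformD n (A B : 'M[C]_n) u v : hform (A + B) u v = hform A u v + hform B u v.
Proof. by rewrite /hform mulmxDr mulmxDl mxE. Qed.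

Lemma hformN n (B : 'M[C]_n) u v : hform (- B) u v = - hform B u v.
Proof. by rewrite /hform mulmxN mulNmx mxE. Qed.

Lemma hformB n (A B : 'M[C]_n) u v : hform (A - B) u v = hform A u v - hform B u v.
Proof. by rewrite hformD hformN. Qed.

Lemma hformZ n a (B : 'M[C]_n) u v : hform (a *: B) u v = a * hform B u v.
Proof. by rewrite /hform -scalemxAr -scalemxAl mxE. Qed.

Lemma hform_sum n I (r : seq I) (P : pred I) (B : I -> 'M[C]_n) u v :
  hform (\sum_(i <- r | P i) B i) u v = \sum_(i <- r | P i) hform (B i) u v.
Proof. by rewrite /hform mulmx_sumr mulmx_suml summxE. Qed.

Lemma hform_congr n q (M : 'M[C]_(n, q)) (B : 'M[C]_q) u v :
  hform (M *m B *m ctmx M) u v = hform B (ctmx M *m u) (ctmx M *m v).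
Proof. by rewrite /hform ctmxM ctmxK !mulmxA. Qed.

Lemma hform_congr_ct n q (M : 'M[C]_(q, n)) (B : 'M[C]_q) u v :
  hform (ctmx M *m B *m M) u v = hform B (M *m u) (M *m v).
Proof. by rewrite -{2}[M]ctmxK hform_congr ctmxK. Qed.

Lemma qform_rank1 n (e v : 'cV[C]_n) :
  qform (e *m ctmx e) v = `|(ctmx e *m v) 0 0| ^+ 2.
Proof.
rewrite -{1}[e]mulmx1 hform_congr /hform mulmx1 mxE big_ord1.
by rewrite ctmxE normCK mulrC.
Qed.

Lemma posdef_ge0 n (B : 'M[C]_n) v : posdef B -> 0 <= qform B v.
Proof.
case=> _ pB; have [->|v0] := eqVneq v 0; last exact/ltW/pB.
by rewrite hform0r.
Qed.

Lemma posdef_congr n (M B : 'M[C]_n) :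
  M \in unitmx -> posdef B -> posdef (M *m B *m ctmx M).
Proof.
move=> uM [hB pB]; split; first by rewrite !ctmxM ctmxK hB mulmxA.
move=> v v0; rewrite -/(hform _ v v) hform_congr; apply: pB.
by rewrite -ctmx_eq0 ctmxM ctmxK mulmx_free_eq0 ?row_free_unit ?ctmx_eq0.
Qed.

End HermitianForms.

Section Cayley.
Variables (C : numClosedFieldType) (n : nat) (A : 'M[C]_n).

Local Notation half := (2^-1%:M : 'M[C]_n).

Fact half_add_half : half + half = 1%:M.
Proof. by rewrite -raddfD /=; congr _%:M; field. Qed.

Lemma qform_lyapunov_eigen (X : 'M_n) (r : 'rV_n) a : r *m X = a *: r ->
  qform (X *m A + A *m ctmx X) (ctmx r) = (a + a^*) * qform A (ctmx r).
Proof.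
move=> rX; rewrite hformD /hform ctmxK !mulmxA rX -!mulmxA -ctmxM rX ctmxZ.
by rewrite -!scalemxAr -!scalemxAl !mxE mulrDl.
Qed.

Lemma qform_stein_eigen (T : 'M_n) (r : 'rV_n) a : r *m T = a *: r ->
  qform (A - T *m A *m ctmx T) (ctmx r) = (1 - a * a^*) * qform A (ctmx r).
Proof.
move=> rT; rewrite hformB /hform ctmxK !mulmxA rT -!mulmxA -ctmxM rT ctmxZ.
by rewrite -!scalemxAr -!scalemxAl !mxE mulrA [a^* * a]mulrC mulrBl mul1r.
Qed.

Lemma lyapunov_shift_unit (X : 'M_n) (c : C) : posdef A ->
  posdef (X *m A + A *m ctmx X) -> 0 <= c -> X + c%:M \in unitmx.
Proof.
move=> [_ pA] [_ pL] c_ge0; rewrite unitmxE unitfE; apply/negP.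
move=> /det0P [r r0 /eqP]; rewrite mulmxDr mul_mx_scalar addr_eq0 => /eqP rX.
have r'0 : ctmx r != 0 by rewrite ctmx_eq0.
have : 0 < qform (X *m A + A *m ctmx X) (ctmx r) := pL _ r'0.
rewrite (@qform_lyapunov_eigen _ _ (- c)) ?rX ?scaleNr //.
rewrite rmorphN /= geC0_conj // -opprD mulNr oppr_gt0; apply/negP.
by rewrite le_gtF // mulr_ge0 ?addr_ge0 // ltW ?pA.
Qed.

Lemma stein_unit (T : 'M_n) : posdef (A - T *m A *m ctmx T) -> 1%:M - T \in unitmx.
Proof.
move=> [_ pS]; rewrite unitmxE unitfE; apply/negP.
move=> /det0P [r r0 /eqP]; rewrite mulmxBr mulmx1 subr_eq0 eq_sym => /eqP rT.
have r'0 : ctmx r != 0 by rewrite ctmx_eq0.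
have : 0 < qform (A - T *m A *m ctmx T) (ctmx r) := pS _ r'0.
rewrite (@qform_stein_eigen _ _ 1) ?scale1r //.
by rewrite rmorph1 mulr1 subrr mul0r ltxx.
Qed.

Lemma cayley_polarization (X : 'M_n) :
  (X + half) *m A *m ctmx (X + half) - (X - half) *m A *m ctmx (X - half)
  = X *m A + A *m ctmx X.
Proof.
rewrite ctmxD ctmxB ctmx_scalar fmorphV rmorph_nat.
rewrite !(mulmxDl, mulmxDr, mulmxN, mulNmx) !(mul_mx_scalar, mul_scalar_mx).
by rewrite -!scalemxAl; apply/matrixP => i j; rewrite !mxE; field.
Qed.

Lemma cayley_stein_congr (X T : 'M_n) : (X + half) *m T = X - half ->
  (X + half) *m (A - T *m A *m ctmx T) *m ctmx (X + half) = X *m A + A *m ctmx X.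
Proof.
move=> PT; rewrite -cayley_polarization mulmxBr mulmxBl !mulmxA.
by rewrite -(mulmxA _ (ctmx T)) -ctmxM PT.
Qed.

Lemma stein_of_lyapunov (X : 'M_n) : posdef A -> posdef (X *m A + A *m ctmx X) ->
  let T := (X - half) *m invmx (X + half) in posdef (A - T *m A *m ctmx T).
Proof.
move=> pA pL T.
have uP : X + half \in unitmx by apply: lyapunov_shift_unit; rewrite ?invr_ge0 ?ler0n.
have PT : (X + half) *m T = X - half.
  rewrite /T; set P := X + half.
  have -> : X - half = P - 1%:M by rewrite /P -half_add_half opprD addrA addrK.
  rewrite mulmxA.
  have -> : P *m (P - 1%:M) = (P - 1%:M) *m P by rewrite mulmxBl mulmxBr mulmx1 mul1mx.
  by rewrite -mulmxA mulmxV // mulmx1.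
rewrite -(invmx_congrK (A - T *m A *m ctmx T) uP) cayley_stein_congr //.
by apply: posdef_congr; rewrite ?unitmx_inv.
Qed.

Lemma stein_scale (T : 'M_n) (lambda : C) : posdef A -> posdef (A - T *m A *m ctmx T) ->
  0 <= lambda <= 1 ->
  posdef (A - (lambda *: T) *m A *m ctmx (lambda *: T)).
Proof.
move=> pA [hS pS] /andP[l_ge0 l_le1].
have hE : forall B, (lambda *: T) *m B *m ctmx (lambda *: T)
    = (lambda ^+ 2) *: (T *m B *m ctmx T).
  move=> B; rewrite ctmxZ geC0_conj // -scalemxAl -scalemxAr -scalemxAl scalerA.
  by rewrite expr2.
split.
  by rewrite hE ctmxB ctmxZ rmorphXn /= geC0_conj // !ctmxM ctmxK pA.1 mulmxA.
move=> v v0; rewrite -/(hform _ v v) hE hformB hformZ.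
have -> : qform A v - lambda ^+ 2 * qform (T *m A *m ctmx T) v
    = (1 - lambda ^+ 2) * qform A v + lambda ^+ 2 * qform (A - T *m A *m ctmx T) v.
  by rewrite hformB; ring.
have [->|l_neq0] := eqVneq lambda 0.
  by rewrite expr0n /= subr0 mul1r mul0r addr0; apply: pA.2.
apply: ltr_wpDl; first by rewrite mulr_ge0 ?subr_ge0 ?exprn_ile1 ?posdef_ge0.
by rewrite mulr_gt0 ?exprn_gt0 ?pS // lt_def l_neq0.
Qed.

Lemma lyapunov_of_stein (T : 'M_n) : posdef (A - T *m A *m ctmx T) ->
  let X := invmx (1%:M - T) - half in posdef (X *m A + A *m ctmx X).
Proof.
move=> pS X; have uT := stein_unit pS.
have PE : X + half = invmx (1%:M - T) by rewrite /X subrK.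
have PT : (X + half) *m T = X - half.
  rewrite PE /X -addrA -opprD half_add_half.
  have -> : invmx (1%:M - T) - 1%:M = invmx (1%:M - T) *m (1%:M - (1%:M - T)).
    by rewrite mulmxBr mulmx1 mulVmx.
  by rewrite opprB addrCA subrr addr0.
rewrite -(cayley_stein_congr PT); apply: posdef_congr pS.
by rewrite PE unitmx_inv.
Qed.

End Cayley.

Section SteinUniqueness.
Variables (C : numClosedFieldType) (n : nat) (Z : 'M[C]_n).
Hypotheses (Z_trig : forall i j : 'I_n, (i < j)%N -> Z i j = 0)
  (Z_diag : forall i j : 'I_n, Z i i * (Z j j)^* != 1).

Lemma mulmx_lower_trigE (D : 'M[C]_n) (i j : 'I_n) :
  (forall a : 'I_n, (a < i)%N -> D a j = 0) -> (Z *m D) i j = Z i i * D i j.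
Proof.
move=> Dlt; rewrite mxE (bigD1 i) //= big1 ?addr0 // => a ai.
have [ia|] := ltnP i a; first by rewrite Z_trig ?mul0r.
by move=> ia; rewrite Dlt ?mulr0 // ltn_neqAle ia andbT.
Qed.

(* Entries of [Z D Z^*] at [(i, j)] only involve [D] at [(a, b)] with [a <= i],
   [b <= j]; induction on [i + j] peels off the diagonal factor. *)
Lemma stein_trig_eq0 (D : 'M[C]_n) : D = Z *m D *m ctmx Z -> D = 0.
Proof.
move=> DE; suff D0 : forall s (i j : 'I_n), (i + j < s)%N -> D i j = 0.
  by apply/matrixP => i j; rewrite mxE (D0 (i + j).+1).
elim=> // s IH i j ijs.
have ZD_lt : forall b : 'I_n, (b < j)%N -> (Z *m D) i b = Z i i * D i b.
  by move=> b bj; apply: mulmx_lower_trigE => a ai; apply: IH; lia.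
have : D i j = Z i i * D i j * (Z j j)^*.
  rewrite -mulmx_lower_trigE => [|a ai]; last by apply: IH; lia.
  rewrite {1}DE mxE (bigD1 j) //= big1 ?addr0 ?ctmxE // => b b_neq_j.
  have [jb|] := ltnP j b; first by rewrite ctmxE Z_trig ?rmorph0 ?mulr0.
  move=> bj; have b_lt_j : (b < j)%N by rewrite ltn_neqAle bj andbT.
  by rewrite ZD_lt // IH ?mulr0 ?mul0r //; lia.
move=> Dij; have : D i j * (1 - Z i i * (Z j j)^*) = 0.
  by rewrite mulrBr mulr1 {1}Dij; ring.
move/eqP; rewrite mulf_eq0 subr_eq0 [1 == _]eq_sym (negbTE (Z_diag i j)) orbF.
by move/eqP.
Qed.

Lemma stein_trig_herm (S E : 'M[C]_n) : ctmx E = E ->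
  S = Z *m S *m ctmx Z + E -> ctmx S = S.
Proof.
move=> hE SE; apply/eqP; rewrite -subr_eq0; apply/eqP/stein_trig_eq0.
have cSE : ctmx S = Z *m ctmx S *m ctmx Z + E.
  by rewrite {1}SE ctmxD hE !ctmxM ctmxK mulmxA.
rewrite {1}cSE [in X in _ - X]SE opprD addrACA subrr addr0.
by rewrite mulmxBr mulmxBl.
Qed.

End SteinUniqueness.

Lemma ord_neq_ltn n (i k : 'I_n) : (k <= i)%N -> i != k -> (k < i)%N.
Proof. by move=> ki ik; rewrite ltn_neqAle ki andbT eq_sym. Qed.

Section SteinPosdef.
Variables (C : numClosedFieldType) (n : nat) (Y X : 'M[C]_n) (e : 'cV[C]_n).
Hypotheses (X_herm : ctmx X = X)
  (Y_trig : forall i j : 'I_n, (j < i)%N -> Y i j = 0)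
  (Y_diag : forall i, `|Y i i| < 1)
  (X_stein : X = ctmx Y *m X *m Y + e *m ctmx e)
  (Y_eigen : forall (k : 'I_n) (w : 'cV_n),
     w k 0 = 1 -> Y *m w = Y k k *: w -> (ctmx e *m w) 0 0 != 0).

(* Induction invariant of [stein_posdef]: on vectors supported in the first [k]
   coordinates [X] is positive definite ([posdef_on k]) and its leading [k x k]
   block is invertible ([solvable_on k]). A [pivot k w] is the Schur-complement
   vector that extends both to [k + 1]. *)
Definition supp_lt (k : nat) (v : 'cV[C]_n) := forall i : 'I_n, (k <= i)%N -> v i 0 = 0.

Definition posdef_on k := forall v, supp_lt k v -> v != 0 -> 0 < qform X v.

Definition solvable_on k := forall u : 'cV[C]_n,
  exists2 a, supp_lt k a & forall i : 'I_n, (i < k)%N -> (X *m a) i 0 = u i 0.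

Definition pivot (k : 'I_n) (w : 'cV[C]_n) :=
  [/\ w k 0 = 1, supp_lt k.+1 w & forall i : 'I_n, (i < k)%N -> (X *m w) i 0 = 0].

Lemma supp_lt_upper_trig k w : supp_lt k w -> supp_lt k (Y *m w).
Proof.
move=> sw i ki; rewrite mxE; apply: big1 => j _.
have [ji|ij] := ltnP j i; first by rewrite Y_trig ?mul0r.
by rewrite sw ?mulr0 // (leq_trans ki ij).
Qed.

Lemma mulmx_upper_trigE (k : 'I_n) w : supp_lt k.+1 w -> (Y *m w) k 0 = Y k k * w k 0.
Proof.
move=> sw; rewrite mxE (bigD1 k) //= big1 ?addr0 // => j jk.
have [jk'|kj] := ltnP j k; first by rewrite Y_trig ?mul0r.
by rewrite sw ?mulr0 //; apply: ord_neq_ltn.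
Qed.

Lemma posdef_on_ge0 j v : posdef_on j -> supp_lt j v -> 0 <= qform X v.
Proof.
by move=> posj sv; have [->|v0] := eqVneq v 0; [rewrite hform0r | exact/ltW/posj].
Qed.

Section Pivot.
Variables (k : 'I_n) (w : 'cV[C]_n).
Hypothesis w_pivot : pivot k w.

Lemma hform_supp_pivot b : supp_lt k b -> hform X b w = 0.
Proof.
case: w_pivot => _ _ Xw0 sb; rewrite hformE; apply: big1 => i _.
by have [ik|ki] := ltnP i k; [rewrite Xw0 ?mulr0 | rewrite sb ?rmorph0 ?mul0r].
Qed.

Lemma hform_pivot_supp b : supp_lt k b -> hform X w b = 0.
Proof. by move=> sb; rewrite hform_herm // hform_supp_pivot // rmorph0. Qed.

Lemma supp_lt_sub_pivot v : supp_lt k.+1 v -> supp_lt k (v - v k 0 *: w).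
Proof.
case: w_pivot => wk sw _ sv i ki; rewrite !mxE.
have [->|ik] := eqVneq i k; first by rewrite wk mulr1 subrr.
by have ki' := ord_neq_ltn ki ik; rewrite (sv i) // (sw i) // mulr0 subrr.
Qed.

Lemma qform_pivot : qform X w = (X *m w) k 0.
Proof.
case: w_pivot => wk sw Xw0; rewrite hformE (bigD1 k) //= wk rmorph1 mul1r.
rewrite big1 ?addr0 // => i ik; have [ik'|ki] := ltnP i k; first by rewrite Xw0 ?mulr0.
by rewrite sw ?rmorph0 ?mul0r //; apply: ord_neq_ltn.
Qed.

(* The Stein equation evaluated at [w]: with [Y w = Y_kk w + y], [y] supported in
   the first [k] coordinates, it reads
   [(1 - |Y_kk|^2) <w, X w> = <y, X y> + |e^* w|^2]. *)
Lemma qform_pivot_gt0 : posdef_on k -> 0 < qform X w.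
Proof.
move=> posk; have [wk sw _] := w_pivot; set mu := Y k k.
set y := Y *m w - mu *: w; have Yw : Y *m w = mu *: w + y by rewrite addrC subrK.
have sy : supp_lt k y.
  have := supp_lt_sub_pivot (supp_lt_upper_trig sw).
  by rewrite mulmx_upper_trigE // wk mulr1.
clearbody y; set s := (ctmx e *m w) 0 0.
have E : (1 - `|mu| ^+ 2) * qform X w = qform X y + `|s| ^+ 2.
  have := congr1 (fun B => qform B w) X_stein; rewrite /= hformD hform_congr_ct.
  rewrite qform_rank1 -/s Yw hformDl !hformDr !hformZl !hformZr.
  rewrite (hform_supp_pivot sy) (hform_pivot_supp sy) !mulr0 addr0 add0r.
  rewrite mulrA [mu^* * _]mulrC -normCK.
  by move=> E; rewrite mulrBl mul1r {1}E; ring.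
have pos_rhs : 0 < qform X y + `|s| ^+ 2.
  have [y0|y_neq0] := eqVneq y 0.
    rewrite y0 hform0r add0r exprn_gt0 // normr_gt0.
    by apply: (Y_eigen wk); rewrite Yw y0 addr0.
  by rewrite ltr_wpDr ?exprn_ge0 ?posk.
have mu_lt1 : 0 < 1 - `|mu| ^+ 2 by rewrite subr_gt0 expr_lt1 ?Y_diag.
by rewrite -(pmulr_rgt0 _ mu_lt1) E.
Qed.

Lemma posdef_on_succ : posdef_on k -> posdef_on k.+1.
Proof.
move=> posk v sv v_neq0; set c := v k 0; set a := v - c *: w.
have sa : supp_lt k a by apply: supp_lt_sub_pivot.
have -> : v = a + c *: w by rewrite /a subrK.
have [c0|c_neq0] := eqVneq c 0.
  by move: sa; rewrite /a c0 scale0r subr0 addr0 => /posk; apply.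
clearbody a; rewrite hformDl !hformDr !hformZl !hformZr.
rewrite (hform_supp_pivot sa) (hform_pivot_supp sa) !mulr0 addr0 add0r.
rewrite mulrA [c^* * c]mulrC -normCK ltr_wpDl ?(posdef_on_ge0 posk) //.
by rewrite mulr_gt0 ?exprn_gt0 ?normr_gt0 ?qform_pivot_gt0.
Qed.

Lemma solvable_on_succ : posdef_on k -> solvable_on k -> solvable_on k.+1.
Proof.
move=> posk solk u; have [wk sw Xw0] := w_pivot.
have Xwk_neq0 : (X *m w) k 0 != 0 by rewrite -qform_pivot gt_eqF ?qform_pivot_gt0.
have [a0 sa0 Xa0] := solk u; set d := (u k 0 - (X *m a0) k 0) / (X *m w) k 0.
exists (a0 + d *: w) => [i ki | i ik].
  by rewrite !mxE sa0 ?sw ?mulr0 ?addr0 // ltnW.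
rewrite mulmxDr -scalemxAr mxE [E in _ + E]mxE.
have [ik'|] := ltnP i k; first by rewrite Xa0 // Xw0 // mulr0 addr0.
move=> ki; have -> : i = k by apply/val_inj/eqP; rewrite eqn_leq ki -ltnS ik.
by rewrite /d divfK // addrC subrK.
Qed.

End Pivot.

Lemma pivot_exists (k : 'I_n) : solvable_on k -> exists w, pivot k w.
Proof.
move=> solk; have [a sa Xa] := solk (X *m delta_mx k 0).
exists (delta_mx k 0 - a); split.
- by rewrite !mxE !eqxx sa // subr0.
- move=> i ki; rewrite !mxE sa ?(ltnW ki) // subr0.
  by case: eqP => // ik; rewrite ik ltnn in ki.
- by move=> i ik; rewrite mulmxBr mxE [E in _ + E]mxE Xa // subrr.
Qed.

Lemma stein_posdef : posdef X.
Proof.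
suff posn : forall k, (k <= n)%N -> posdef_on k /\ solvable_on k.
  split => // v v0; apply: (proj1 (posn n (leqnn n))) => // i.
  by rewrite leqNgt ltn_ord.
elim=> [_ | k IHk kn].
  split=> [v sv | u]; last by exists 0 => // i; rewrite !mxE.
  by case/negP; apply/eqP/matrixP => i j; rewrite (ord1 j) mxE sv.
have [posk solk] := IHk (ltnW kn).
have [w w_pivot] := pivot_exists (k := Ordinal kn) solk.
by split; [apply: (posdef_on_succ w_pivot) | apply: (solvable_on_succ w_pivot)].
Qed.

End SteinPosdef.

Section Blocks.
Variables (m : nat) (nn : 'I_m.+1 -> nat).

Local Notation N := (Ntot nn).
Local Notation sh := (sizes nn).

Lemma size_sizes : size sh = m.+1.
Proof. by rewrite size_map size_enum_ord. Qed.

Lemma blkE (i : nat) : (i < N)%N -> (blk nn i : nat) = reshape_index sh i.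
Proof. by move=> iN; rewrite inordK // -size_sizes reshape_indexP. Qed.

Lemma blk_offE (i : nat) : i = (sumn (take (reshape_index sh i) sh) + off nn i)%N.
Proof. by rewrite -[LHS](reshape_indexK sh i). Qed.

Lemma eq_blk_off (i i' : 'I_N) : blk nn i = blk nn i' ->
  (i + off nn i' = i' + off nn i)%N.
Proof.
move=> /(congr1 val); rewrite /= !blkE // => eq_ri.
by rewrite {1}(blk_offE i) {2}(blk_offE i') eq_ri; lia.
Qed.

Lemma blk_pred (i : 'I_N) : (0 < off nn i)%N ->
  exists2 i' : 'I_N, i'.+1 = i :> nat & blk nn i' = blk nn i.
Proof.
move=> off_gt0; have iE := blk_offE i.
have i_gt0 : (0 < i)%N by lia.
have ilt : (i.-1 < N)%N by rewrite (leq_ltn_trans (leq_pred i)).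
exists (Ordinal ilt); first by rewrite /= prednK.
apply: val_inj; rewrite /= !blkE //.
have -> : i.-1 = flatten_index sh (reshape_index sh i) (off nn i).-1.
  by rewrite /flatten_index; lia.
rewrite flatten_indexKl // /off in off_gt0 *.
have := reshape_offsetP (ltn_ord i : (i < sumn sh)%N); lia.
Qed.

End Blocks.

Section ZmxEigenvectors.
Variables (C : numClosedFieldType) (m : nat) (nn : 'I_m.+1 -> nat) (z : 'I_m.+1 -> C).

Local Notation N := (Ntot nn).
Local Notation Z := (Zmx nn z).
Local Notation e := (evec C nn).

Lemma ZmxE (i i' : 'I_N) : Z i i' = if i == i' then z (blk nn i)
  else if (i == i'.+1 :> nat) && (blk nn i == blk nn i') then 1 else 0.
Proof.
rewrite mxE; have [eq_b|neq_b] := eqVneq (blk nn i) (blk nn i'); last first.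
  rewrite andbF; have [eq_i|//] := eqVneq i i'.
  by rewrite eq_i eqxx in neq_b.
have eq_off := eq_blk_off eq_b; rewrite andbT.
have [<-|neq_i] := eqVneq i i'; first by rewrite eqxx.
have -> : (off nn i == off nn i') = false.
  by apply: contraNF neq_i => /eqP off_eq; apply/eqP/ord_inj; lia.
by congr (if _ then _ else _); apply/eqP/eqP; lia.
Qed.

Lemma Zmx_trig (i j : 'I_N) : (i < j)%N -> Z i j = 0.
Proof.
move=> ij; rewrite ZmxE ifN ?ifN //; first by apply/nandP; left; lia.
by rewrite neq_ltn ij.
Qed.

Lemma Zmx_diag (i : 'I_N) : Z i i = z (blk nn i).
Proof. by rewrite ZmxE eqxx. Qed.

Lemma ctmx_Zmx_mulE (w : 'cV[C]_N) (i : 'I_N) : (ctmx Z *m w) i 0 =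
  (z (blk nn i))^* * w i 0
  + \sum_(j : 'I_N | (j == i.+1 :> nat) && (blk nn j == blk nn i)) w j 0.
Proof.
rewrite mxE (bigD1 i) //= ctmxE Zmx_diag big_mkcond [in RHS]big_mkcond /=.
congr (_ + _); apply: eq_bigr => j _; rewrite ctmxE ZmxE.
case: eqP => [->|_] /=; first by rewrite ltn_eqF.
by case: ifP; rewrite ?rmorph1 ?rmorph0 ?mul1r ?mul0r.
Qed.

Section Eigenvector.
Variables (k : 'I_N) (w : 'cV[C]_N).
Hypotheses (z_inj : injective z) (w_eigen : ctmx Z *m w = (z (blk nn k))^* *: w).

Lemma Zmx_eigen_out_blk (i : 'I_N) : blk nn i != blk nn k -> w i 0 = 0.
Proof.
suff: forall t (i : 'I_N), (N - i <= t)%N -> blk nn i != blk nn k -> w i 0 = 0.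
  by apply; apply: leqnn.
elim=> [|t IH] {}i it neq_b; first by move: it (ltn_ord i); lia.
have := congr1 (fun v : 'cV[C]_N => v i 0) w_eigen; rewrite /= ctmx_Zmx_mulE mxE.
rewrite big1 => [|j /andP[/eqP ji /eqP eq_b]]; last by rewrite IH ?eq_b //; lia.
rewrite addr0 => /eqP; rewrite -subr_eq0 -mulrBl mulf_eq0 subr_eq0.
by rewrite (inj_eq (can_inj conjCK)) (inj_eq z_inj) (negbTE neq_b) => /eqP.
Qed.

Lemma Zmx_eigen_head : w k 0 != 0 -> off nn k = 0%N.
Proof.
move=> wk_neq0; apply/eqP; rewrite -leqn0 leqNgt; apply/negP => /blk_pred[i ik eq_b].
have := congr1 (fun v : 'cV[C]_N => v i 0) w_eigen; rewrite /= ctmx_Zmx_mulE mxE eq_b.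
rewrite (big_pred1 k) => [|j]; last first.
  rewrite ik /=; case: (eqVneq j k) => [->|neq_j]; first by rewrite !eqxx.
  by apply/negbTE; apply: contra neq_j => /andP[/eqP/ord_inj -> _].
by move=> /eqP; rewrite -[X in _ == X]addr0 (can_eq (addKr _)) (negbTE wk_neq0).
Qed.

Lemma evec_Zmx_eigen : w k 0 != 0 -> (ctmx e *m w) 0 0 = w k 0.
Proof.
move=> wk_neq0; have head := Zmx_eigen_head wk_neq0.
rewrite mxE (bigD1 k) //= ctmxE mxE head eqxx rmorph1 mul1r big1 ?addr0 // => i ik.
rewrite ctmxE mxE; case: eqP => [off_i|_]; last by rewrite rmorph0 mul0r.
have [eq_b|neq_b] := eqVneq (blk nn i) (blk nn k); last first.
  by rewrite Zmx_eigen_out_blk ?mulr0.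
have := eq_blk_off eq_b; rewrite off_i head => /eqP; rewrite eqn_add2r => /eqP/val_inj.
by move/eqP: ik.
Qed.

End Eigenvector.
End ZmxEigenvectors.

Lemma Zmx_stein_posdef (C : numClosedFieldType) (m : nat) (nn : 'I_m.+1 -> nat)
    (z : 'I_m.+1 -> C) (S : 'M[C]_(Ntot nn)) :
  injective z -> (forall j, `|z j| < 1) ->
  S = Zmx nn z *m S *m ctmx (Zmx nn z) + evec C nn *m (evec C nn)^T -> posdef S.
Proof.
move=> z_inj z_lt1 SE; set Z := Zmx nn z; set e := evec C nn.
have ctmx_e : ctmx e = e^T.
  by apply/matrixP => i j; rewrite ctmxE !mxE; case: eqP; rewrite ?rmorph1 ?rmorph0.
have Z_diag i j : Z i i * (Z j j)^* != 1.
  rewrite !Zmx_diag; apply/eqP => /(congr1 Num.norm); apply/eqP.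
  by rewrite normrM norm_conjC normr1 lt_eqF // mulr_ilt1 ?normr_ge0.
have S_herm : ctmx S = S.
  apply: (stein_trig_herm (@Zmx_trig _ _ _ z) Z_diag _ SE).
  by rewrite -ctmx_e ctmxM ctmxK.
apply: (@stein_posdef _ _ (ctmx Z) _ e) => //.
- by move=> i j ji; rewrite ctmxE Zmx_trig ?rmorph0.
- by move=> i; rewrite ctmxE Zmx_diag norm_conjC.
- by rewrite ctmxK ctmx_e.
- move=> k w wk w_eigen; rewrite ctmxE Zmx_diag in w_eigen.
  by rewrite (evec_Zmx_eigen z_inj w_eigen) wk ?oner_neq0.
Qed.

Lemma getmx_ord (C : numClosedFieldType) p q (A : 'M[C]_(p, q)) (i : 'I_p) (j : 'I_q) :
  getmx A i j = A i j.
Proof.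
rewrite /getmx; case: insubP => [i' _ i'E|]; last by rewrite ltn_ord.
by case: insubP => [j' _ j'E|]; [congr (A _ _); apply: val_inj | rewrite ltn_ord].
Qed.

Section KronId.
Variables (C : numClosedFieldType) (p l : nat).
Hypothesis l_gt0 : (0 < l)%N.

Lemma ltn_div_mul (k : 'I_(p * l)) : (k %/ l < p)%N.
Proof. by rewrite ltn_divLR. Qed.

Definition ord_div (k : 'I_(p * l)) : 'I_p := Ordinal (ltn_div_mul k).

Definition ord_mod (k : 'I_(p * l)) : 'I_l := Ordinal (ltn_pmod k l_gt0).

Lemma kron_idE (S : 'M[C]_p) (k k' : 'I_(p * l)) :
  kron_id l S k k' = if (k %% l == k' %% l)%N then S (ord_div k) (ord_div k') else 0.
Proof. by rewrite mxE -getmx_ord. Qed.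

(* [sel_mx r] embeds [C^p] as the coordinates [a * l + r] of [C^(p * l)]. *)
Definition sel_mx (r : 'I_l) : 'M[C]_(p * l, p) :=
  \matrix_(k, a) ((k %% l == r) && (k %/ l == a))%N%:R.

Lemma sel_mx_mul q (r : 'I_l) (B : 'M[C]_(p, q)) k b :
  (sel_mx r *m B) k b = if (k %% l == r)%N then B (ord_div k) b else 0.
Proof.
rewrite mxE (bigD1 (ord_div k)) //= mxE eqxx andbT big1 ?addr0.
  by case: eqP; rewrite ?mul1r ?mul0r.
move=> a ak; rewrite mxE [(_ %/ _ == _)%N](_ : _ = false) ?andbF ?mul0r //.
by apply: contraNF ak => /eqP kaE; apply/eqP/val_inj.
Qed.

Lemma kron_id_sum (S : 'M[C]_p) :
  kron_id l S = \sum_r sel_mx r *m S *m ctmx (sel_mx r).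
Proof.
apply/matrixP => k k'; rewrite kron_idE summxE.
have selE r : (sel_mx r *m S *m ctmx (sel_mx r)) k k'
    = if (k %% l == r)%N && (k' %% l == r)%N then S (ord_div k) (ord_div k') else 0.
  have -> : sel_mx r *m S *m ctmx (sel_mx r) = ctmx (sel_mx r *m ctmx (sel_mx r *m S)).
    by rewrite ctmxM ctmxK.
  rewrite ctmxE sel_mx_mul ctmxE sel_mx_mul.
  by case: eqP; case: eqP; rewrite ?rmorph0 ?conjCK.
rewrite (bigD1 (ord_mod k)) //= selE eqxx [(k' %% l == k %% l)%N]eq_sym big1 ?addr0 //.
move=> r rk; rewrite selE ifN //.
by apply: contra rk => /andP[/eqP kr _]; apply/eqP/val_inj.
Qed.

Lemma ctmx_sel_mx_mul_eq0 (v : 'cV[C]_(p * l)) :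
  (forall r, ctmx (sel_mx r) *m v = 0) -> v = 0.
Proof.
move=> sel_v0; apply/matrixP => k j; rewrite (ord1 j) mxE.
have := congr1 (fun u : 'cV[C]_p => u (ord_div k) 0) (sel_v0 (ord_mod k)).
rewrite [ctmx _ *m v]/= !mxE (bigD1 k) //= big1 ?addr0.
  by rewrite ctmxE mxE !eqxx rmorph1 mul1r.
move=> k' k'k; rewrite ctmxE mxE [_ && _](_ : _ = false) ?rmorph0 ?mul0r //.
apply: contra_neqF k'k => /andP[/eqP modE /eqP divE]; apply/val_inj.
by rewrite /= (divn_eq k' l) (divn_eq k l) modE divE.
Qed.

Lemma kron_id_posdef (S : 'M[C]_p) : posdef S -> posdef (kron_id l S).
Proof.
move=> [S_herm S_pos]; split.
  apply/matrixP => k k'; rewrite ctmxE !kron_idE eq_sym.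
  by case: eqP => _; rewrite ?rmorph0 // -ctmxE S_herm.
move=> v v_neq0; rewrite -/(hform _ v v) kron_id_sum hform_sum.
have [r sel_v_neq0] : exists r, ctmx (sel_mx r) *m v != 0.
  apply/existsP; apply: contraR v_neq0 => /existsPn sel_v0.
  by apply/eqP/ctmx_sel_mx_mul_eq0 => r; apply/eqP/negPn/sel_v0.
rewrite (bigD1 r) //= ltr_wpDr ?hform_congr ?S_pos //.
by apply: sumr_ge0 => r' _; rewrite hform_congr posdef_ge0.
Qed.

End KronId.

Theorem lemma4 (C : numClosedFieldType) (l m : nat) (nn : 'I_m.+1 -> nat)
  (z : 'I_m.+1 -> C) (Wjk : 'I_m.+1 -> nat -> 'M[C]_l)
  (S : 'M[C]_(Ntot nn)) :
  (0 < l)%N ->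
  (forall j, 0 < nn j)%N ->
  z ord0 = 0 ->
  injective z ->
  (forall j, `|z j| < 1) ->
  S = Zmx nn z *m S *m ctmx (Zmx nn z) + evec C nn *m (evec C nn)^T ->
  let W := Wmx nn Wjk in
  let SI := kron_id l S in
  posdef (W *m SI + SI *m ctmx W) ->
  let T := (W - 2^-1%:M) *m invmx (W + 2^-1%:M) in
  forall lambda : C, 0 <= lambda <= 1 ->
    let Wl := invmx (1%:M - lambda *: T) - 2^-1%:M in
    posdef (Wl *m SI + SI *m ctmx Wl).
Proof.
move=> l_gt0 _ _ z_inj z_lt1 SE W SI W_lyap T lambda lambda01 Wl.
have SI_posdef : posdef SI := kron_id_posdef l_gt0 (Zmx_stein_posdef z_inj z_lt1 SE).
have T_stein := stein_of_lyapunov SI_posdef W_lyap.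
exact: lyapunov_of_stein (stein_scale SI_posdef T_stein lambda01).
Qed.
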